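(* Let $\varphi$ be a skew-morphism of a finite group $A$ of order $m$ with power function $\pi:A\to\mathbb{Z}_m$ and derived power function $\sigma_\pi$. Then for all nonnegative integers $k,k_1,k_2,q,r$: (a) $\sigma_\pi(xy,k)\equiv\sigma_\pi(y,\sigma_\pi(x,k))\pmod m$ for all $x,y\in A$; (b) $\sigma_\pi(x,k)\equiv0\pmod m$ for all $x\in A$ if and only if $m\mid k$; (c) $\sigma_\pi(x,mq+r)\equiv\sigma_\pi(x,r)\pmod m$ for all $x\in A$; (d) $\sigma_\pi(x,k_1)\equiv\sigma_\pi(x,k_2)\pmod m$ for all $x\in A$ if and only if $k_1\equiv k_2\pmod m$.
   Context: A skew-morphism of a finite group $A$ is a permutation $\varphi$ of $A$ with $\varphi(1_A)=1_A$ for which there is a function $\pi:A\to\mathbb{Z}_m$, $m$ the order of $\varphi$ as a permutation, such that $\varphi(xy)=\varphi(x)\varphi^{\pi(x)}(y)$ for all $x,y\in A$ ($\pi$ is the power function). The derived power function is $\sigma_\pi(x,0)=0$ and $\sigma_\pi(x,k)=\sum_{i=1}^{k}\pi(\varphi^{i-1}(x))$ (computed in $\mathbb{Z}_m$) for $k>0$; in (a) the inner value $\sigma_\pi(x,k)\in\mathbb{Z}_m$ is used as second argument via any nonnegative integer representative. *)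

From mathcomp Require Import all_boot all_fingroup.
Set Implicit Arguments. Unset Strict Implicit. Unset Printing Implicit Defensive.

Local Open Scope group_scope.

(* A skew-morphism of the finite group gT (the whole group type): a permutation
   phi of gT fixing 1, with a power function pi : gT -> Z_m, m = #[phi] the
   order of phi as a permutation (elements of Z_m represented in 'I_m). *)
Definition is_skew_morphism (gT : finGroupType) (phi : {perm gT})
  (pi : gT -> 'I_#[phi]) : Prop :=
  phi 1 = 1 /\ forall x y : gT, phi (x * y) = phi x * (phi ^+ pi x) y.

Definition sigma_pi (gT : finGroupType) (phi : {perm gT})
  (pi : gT -> 'I_#[phi]) (x : gT) (k : nat) : nat :=
  ((\sum_(i < k) nat_of_ord (pi ((phi ^+ i) x))) %% #[phi])%N.

(* Iterating phi (x y) = phi x * phi^(pi x) y gives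
   phi^k (x y) = phi^k x * phi^(s(x,k)) y, with s(x,k) the integer sum behind
   sigma(x,k). Cancelling phi^k x shows that phi^k determines every
   phi^(s(x,k)); conversely y = x^-1 recovers phi^k x from them, as
   phi^k 1 = 1. Since a = b (mod m) exactly when phi^a = phi^b, this gives (d),
   hence (b) and (c). Expanding phi^k (x (y z)) in two ways gives (a). *)
From mathcomp Require Import all_boot all_fingroup cyclic.

Local Open Scope group_scope.

Lemma eq_expg_mod (gT : finGroupType) (a : gT) i j :
  i = j %[mod #[a]] <-> a ^+ i = a ^+ j.
Proof.
by split=> /eqP; [rewrite -eq_expg_mod_order | rewrite eq_expg_mod_order] => /eqP.
Qed.

Section SkewMorphism.
Variables (gT : finGroupType) (phi : {perm gT}) (pi : gT -> 'I_#[phi]).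
Hypothesis skew_phi : is_skew_morphism pi.

Local Notation m := #[phi].

Definition power_sum (x : gT) (k : nat) : nat :=
  (\sum_(i < k) pi ((phi ^+ i) x))%N.

Lemma sigma_piE x k : sigma_pi pi x k = (power_sum x k %% m)%N.
Proof. by []. Qed.

Lemma expg_skew1 k : (phi ^+ k) 1 = 1.
Proof.
by elim: k => [|k IHk]; rewrite ?expg0 ?perm1 // expgSr permM IHk (proj1 skew_phi).
Qed.

Lemma expg_skewM k x y : (phi ^+ k) (x * y) = (phi ^+ k) x * (phi ^+ power_sum x k) y.
Proof.
elim: k => [|k IHk]; first by rewrite /power_sum big_ord0 !expg0 !perm1.
rewrite /power_sum big_ord_recr /= -/(power_sum x k) expgSr permM IHk.
by rewrite (proj2 skew_phi) permM expgD permM.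
Qed.

Lemma eq_expg_power_sum k1 k2 :
  phi ^+ k1 = phi ^+ k2 <-> forall x, phi ^+ power_sum x k1 = phi ^+ power_sum x k2.
Proof.
split=> [E x | E].
  apply/permP => y; apply: (@mulgI _ ((phi ^+ k1) x)).
  by rewrite -expg_skewM E expg_skewM.
apply/permP => x; apply: (@mulIg _ ((phi ^+ power_sum x k1) x^-1)).
by rewrite -expg_skewM E -expg_skewM mulgV !expg_skew1.
Qed.

Lemma expg_power_sumM k x y :
  phi ^+ power_sum (x * y) k = phi ^+ power_sum y (power_sum x k).
Proof.
apply/permP => z; apply: (@mulgI _ ((phi ^+ k) (x * y))).
by rewrite -expg_skewM -mulgA !expg_skewM mulgA.
Qed.

Lemma eq_sigma_pi_mod k1 k2 :
  (forall x, sigma_pi pi x k1 = sigma_pi pi x k2 %[mod m]) <-> k1 = k2 %[mod m].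
Proof.
split=> [E | /eq_expg_mod /eq_expg_power_sum E x].
  apply/eq_expg_mod/eq_expg_power_sum => x; apply/eq_expg_mod.
  by have := E x; rewrite !sigma_piE !modn_mod => ->.
by rewrite !sigma_piE !modn_mod; apply/eq_expg_mod/E.
Qed.

Lemma sigma_pi0 x : sigma_pi pi x 0 = 0%N.
Proof. by rewrite sigma_piE /power_sum big_ord0 mod0n. Qed.

Lemma sigma_pi_eq0_mod k : (forall x, sigma_pi pi x k = 0 %[mod m]) <-> m %| k.
Proof.
have [E1 E2] := eq_sigma_pi_mod k 0.
split=> [E | /eqP m_dvd_k x].
  by apply/eqP; rewrite -(mod0n m); apply: E1 => x; rewrite sigma_pi0.
by rewrite -(sigma_pi0 x); apply: E2; rewrite mod0n.
Qed.

Lemma sigma_pi_mulnDl q r x : sigma_pi pi x (m * q + r) = sigma_pi pi x r %[mod m].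
Proof. by move: x; apply/eq_sigma_pi_mod; rewrite mulnC modnMDl. Qed.

Lemma sigma_piM k j x y : j = sigma_pi pi x k %[mod m] ->
  sigma_pi pi (x * y) k = sigma_pi pi y j %[mod m].
Proof.
rewrite sigma_piE modn_mod => /eq_expg_mod /eq_expg_power_sum Ej.
by rewrite !sigma_piE !modn_mod; apply/eq_expg_mod; rewrite Ej expg_power_sumM.
Qed.

End SkewMorphism.

Theorem proposition2p4 (gT : finGroupType) (phi : {perm gT})
  (pi : gT -> 'I_#[phi]) :
  is_skew_morphism pi ->
  (* (a): for any nonnegative representative j of sigma(x,k) *)
  (forall (k j : nat) (x y : gT), j = sigma_pi pi x k %[mod #[phi]] ->
     sigma_pi pi (x * y) k = sigma_pi pi y j %[mod #[phi]]) /\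
  (* (b) *)
  (forall k : nat,
     (forall x : gT, sigma_pi pi x k = 0 %[mod #[phi]]) <-> (#[phi] %| k)%N) /\
  (* (c) *)
  (forall (q r : nat) (x : gT),
     sigma_pi pi x (#[phi] * q + r)%N = sigma_pi pi x r %[mod #[phi]]) /\
  (* (d) *)
  (forall k1 k2 : nat,
     (forall x : gT, sigma_pi pi x k1 = sigma_pi pi x k2 %[mod #[phi]]) <->
     k1 = k2 %[mod #[phi]]).
Proof.
move=> skew_phi; split; first exact: sigma_piM.
split; first exact: sigma_pi_eq0_mod.
split; first exact: sigma_pi_mulnDl.
exact: eq_sigma_pi_mod.
Qed.
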